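(* Let $x\in\{0,1\}^*$ and let $Y\subseteq\{0,1\}^*$ be a finite nonempty set of words with $x\notin Y$. Then there is a $2^{|Y|}$-state AfA that accepts $x$ with probability $1$ and accepts every word of $Y$ with probability $0$.
   Context: An $n$-state affine finite automaton (AfA) over a finite alphabet $\Sigma$ consists of real $n\times n$ matrices $A_\sigma$ for $\sigma\in\Sigma\cup\{\$\}$ ($\$$ a right end-marker), each of whose columns sums to $1$; an initial vector $v_0\in\mathbb{R}^n$ with entries summing to $1$; and a set $E_a$ of accepting states. On input $w=w_1\cdots w_k$ the final vector is $v_f=A_\$A_{w_k}\cdots A_{w_1}v_0$, and $w$ is accepted with probability $\sum_{j\in E_a}|v_f[j]|\big/\sum_{j=1}^n|v_f[j]|$. *)

From HB Require Import structures.
From mathcomp Require Import all_boot all_order all_algebra.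
Set Implicit Arguments. Unset Strict Implicit. Unset Printing Implicit Defensive.
Import Order.TTheory GRing.Theory Num.Theory.
Local Open Scope ring_scope.

(* Input alphabet Sigma = {0,1} is [bool]; words are [seq bool].
   The extended alphabet Sigma ∪ {$} is [option bool], with [None] = $. *)
Definition word := seq bool.

Record afa (R : realFieldType) (n : nat) := AfA {
  afa_mx   : option bool -> 'M[R]_n;
  afa_init : 'cV[R]_n;
  afa_acc  : {set 'I_n}
}.

Definition is_afa (R : realFieldType) (n : nat) (M : afa R n) : Prop :=
  (forall (s : option bool) (j : 'I_n), \sum_(i < n) afa_mx M s i j = 1) /\
  \sum_(i < n) afa_init M i ord0 = 1.

Definition afa_final (R : realFieldType) (n : nat) (M : afa R n) (w : word)
  : 'cV[R]_n :=
  afa_mx M None *m foldl (fun v a => afa_mx M (Some a) *m v) (afa_init M) w.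

Definition accept_prob (R : realFieldType) (n : nat) (M : afa R n) (w : word)
  : R :=
  (\sum_(j in afa_acc M) `|afa_final M w j ord0|) /
  (\sum_(j < n) `|afa_final M w j ord0|).

From HB Require Import structures.
From mathcomp Require Import all_boot all_order all_algebra.
From mathcomp Require Import zify ring.
Set Implicit Arguments. Unset Strict Implicit. Unset Printing Implicit Defensive.
Import Order.TTheory GRing.Theory Num.Theory.
Local Open Scope ring_scope.

(* A word is first coded injectively by a natural number [code w] (bijective
   base-3 numeration), so that reading a letter [b] acts on the code by the
   affine map [k |-> 3 k + 1 + b].  With [N > |Y|] states the automaton keeps
   the affine vector [(1 - sum_(j>0) k^j, k, k^2, ..., k^(N-1))]; an affine
   substitution [k |-> p(k)] sends every power [k^i] to the degree-[i]
   polynomial [p(k)^i] in [k], hence acts linearly on this vector, by a matrix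
   whose columns sum to 1.  The end-marker finally moves [P(k)] into state 1,
   where [P] is the interpolation polynomial with [P(code x) = 1] vanishing at
   the codes of [Y]; the resulting final vector [(1 - P(k), P(k), 0, ...)]
   accepts with probability [|P(k)| / (|1 - P(k)| + |P(k)|)]. *)

Lemma sum_mulmx_col (R : comNzRingType) (m n : nat) (A : 'M[R]_(m, n))
    (v : 'cV[R]_n) :
  \sum_i (A *m v) i ord0 = \sum_j (\sum_i A i j) * v j ord0.
Proof.
under eq_bigr do rewrite mxE.
by rewrite exchange_big; apply: eq_bigr => j _; rewrite mulr_suml.
Qed.

Section AffineVectors.

Variables (R : comNzRingType) (N : nat).
Hypothesis N_gt1 : (1 < N)%N.

Definition idx0 : 'I_N := Ordinal (ltnW N_gt1).
Definition idx1 : 'I_N := Ordinal N_gt1.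

Lemma idx1_neq0 : idx1 != idx0. Proof. by []. Qed.

Definition affine_vec (g : 'I_N -> R) : 'cV[R]_N :=
  \col_i (if i == idx0 then 1 - \sum_(j | j != idx0) g j else g i).

Definition affine_mx (B : 'M[R]_N) : 'M[R]_N :=
  \matrix_(i, j) (if i == idx0 then 1 - \sum_(k | k != idx0) B k j
                  else B i j).

Lemma affine_vecE (g : 'I_N -> R) (i : 'I_N) :
  i != idx0 -> affine_vec g i ord0 = g i.
Proof. by rewrite mxE => /negbTE ->. Qed.

Lemma sum_affine_vec (g : 'I_N -> R) : \sum_i affine_vec g i ord0 = 1.
Proof.
rewrite (bigD1 idx0) //= mxE eqxx.
by rewrite (eq_bigr g) ?subrK // => i; apply: affine_vecE.
Qed.

Lemma colsum_affine_mx (B : 'M[R]_N) (j : 'I_N) : \sum_i affine_mx B i j = 1.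
Proof.
rewrite (bigD1 idx0) //= mxE eqxx.
by rewrite (eq_bigr (B^~ j)) ?subrK // => i /negbTE i_neq0; rewrite mxE i_neq0.
Qed.

Lemma eq_affine_vec (g1 g2 : 'I_N -> R) :
  {in [pred i | i != idx0], g1 =1 g2} -> affine_vec g1 = affine_vec g2.
Proof.
move=> g12; apply/matrixP => i j; rewrite !mxE.
case: eqP => [_|/eqP i_neq0]; last exact: g12.
by congr (1 - _); apply: eq_bigr => k; apply: g12.
Qed.

Lemma affine_vec_sum1 (v : 'cV[R]_N) :
  \sum_i v i ord0 = 1 -> v = affine_vec (fun i => v i ord0).
Proof.
rewrite (bigD1 idx0) //= => sum_v; apply/matrixP => i j; rewrite (ord1 j) mxE.
by case: eqP => [->|//]; rewrite -sum_v addrK.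
Qed.

Lemma mul_affine_mx (B : 'M[R]_N) (v : 'cV[R]_N) : \sum_i v i ord0 = 1 ->
  affine_mx B *m v = affine_vec (fun i => (B *m v) i ord0).
Proof.
move=> sum_v; rewrite [LHS]affine_vec_sum1; last first.
  by rewrite sum_mulmx_col -[RHS]sum_v; apply: eq_bigr => j _;
     rewrite colsum_affine_mx mul1r.
apply: eq_affine_vec => i /negbTE i_neq0; rewrite !mxE.
by apply: eq_bigr => j _; rewrite mxE i_neq0.
Qed.

Definition moment_vec (a : R) : 'cV[R]_N := affine_vec (fun i => a ^+ i).

(* Entry [j > 0] is shifted by the constant coefficient, which compensates
   for the coordinate [idx0] carrying [1 - sum_(j>0) a^j] instead of [a^0]. *)
Definition coef_mx (Q : 'I_N -> {poly R}) : 'M[R]_N :=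
  \matrix_(i, j) ((Q i)`_j + (Q i)`_0 *+ (j != idx0)).

Lemma coef_mx_moment (Q : 'I_N -> {poly R}) (a : R) (i : 'I_N) :
  (size (Q i) <= N)%N ->
  (coef_mx Q *m moment_vec a) i ord0 = (Q i).[a].
Proof.
move=> size_Qi; rewrite mxE (horner_coef_wide _ size_Qi).
rewrite (bigD1 idx0) //= [in RHS](bigD1 idx0) //=.
rewrite !mxE !eqxx /= expr0 mulr1 addr0.
have -> : \sum_(j | j != idx0) coef_mx Q i j * moment_vec a j ord0 =
          \sum_(j | j != idx0) (Q i)`_j * a ^+ j +
          (Q i)`_0 * \sum_(j | j != idx0) a ^+ j.
  rewrite mulr_sumr -big_split; apply: eq_bigr => j j_neq0.
  by rewrite affine_vecE // mxE j_neq0 mulr1n mulrDl.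
by rewrite mulrBr mulr1; ring.
Qed.

Definition poly_mx (Q : 'I_N -> {poly R}) : 'M[R]_N := affine_mx (coef_mx Q).

Lemma poly_mx_moment (Q : 'I_N -> {poly R}) (a : R) :
  (forall i, size (Q i) <= N)%N ->
  poly_mx Q *m moment_vec a = affine_vec (fun i => (Q i).[a]).
Proof.
move=> size_Q; rewrite mul_affine_mx ?sum_affine_vec //.
by apply: eq_affine_vec => i _; rewrite coef_mx_moment.
Qed.

Definition subst_mx (p : {poly R}) : 'M[R]_N := poly_mx (fun i => p ^+ i).

Lemma subst_mx_moment (p : {poly R}) (a : R) : (size p <= 2)%N ->
  subst_mx p *m moment_vec a = moment_vec p.[a].
Proof.
move=> size_p; rewrite poly_mx_moment; last first.
  move=> i; apply: leq_trans (size_poly_exp_leq _ _) _.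
  by have := ltn_ord i; nia.
by apply: eq_affine_vec => i _; rewrite horner_exp.
Qed.

Lemma foldl_subst_mx_moment (T : Type) (step : T -> {poly R}) (w : seq T)
    (a : R) :
  (forall t, size (step t) <= 2)%N ->
  foldl (fun v t => subst_mx (step t) *m v) (moment_vec a) w =
  moment_vec (foldl (fun a t => (step t).[a]) a w).
Proof.
by move=> size_step; elim: w a => [|t w IHw] a //=; rewrite subst_mx_moment.
Qed.

End AffineVectors.

Section PolynomialAfA.

Variables (R : realFieldType) (N : nat).
Hypothesis N_gt1 : (1 < N)%N.
Variable step : bool -> {poly R}.
Hypothesis size_step : forall b, (size (step b) <= 2)%N.

Definition run (w : word) : R := foldl (fun a b => (step b).[a]) 0 w.

Definition readout_mx (P : {poly R}) : 'M[R]_N :=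
  poly_mx N_gt1 (fun i => if i == idx1 N_gt1 then P else 0).

Definition poly_afa (P : {poly R}) : afa R N :=
  AfA (fun s => if s is Some b then subst_mx N_gt1 (step b) else readout_mx P)
      (moment_vec N_gt1 0) [set idx1 N_gt1].

Lemma is_afa_poly_afa (P : {poly R}) : is_afa (poly_afa P).
Proof. by split=> [[b|] j|]; rewrite ?colsum_affine_mx ?sum_affine_vec. Qed.

Lemma afa_final_poly_afa (P : {poly R}) (w : word) : (size P <= N)%N ->
  afa_final (poly_afa P) w =
  affine_vec N_gt1 (fun i => if i == idx1 N_gt1 then P.[run w] else 0).
Proof.
move=> size_P; rewrite /afa_final /= foldl_subst_mx_moment // poly_mx_moment.
  by apply: eq_affine_vec => i _; case: ifP; rewrite ?horner0.
by move=> i; case: ifP; rewrite ?size_poly0.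
Qed.

Lemma accept_prob_poly_afa (P : {poly R}) (w : word) : (size P <= N)%N ->
  accept_prob (poly_afa P) w =
  `|P.[run w]| / (`|1 - P.[run w]| + `|P.[run w]|).
Proof.
move=> size_P; rewrite /accept_prob afa_final_poly_afa //= big_set1.
rewrite (bigD1 (idx0 N_gt1)) //= (bigD1 (idx1 N_gt1)) ?idx1_neq0 //=.
rewrite big1 ?addr0 => [|i /andP[i_neq0 i_neq1]]; last first.
  by rewrite affine_vecE // (negbTE i_neq1) normr0.
rewrite affine_vecE ?idx1_neq0 // eqxx mxE eqxx.
rewrite (bigD1 (idx1 N_gt1)) ?idx1_neq0 //= ?eqxx big1 ?addr0 //.
by move=> i /andP[_ /negbTE ->].
Qed.

End PolynomialAfA.

Lemma exists_indicator_poly (F : fieldType) (s : seq F) (x : F) :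
  x \notin s -> exists P : {poly F},
    [/\ (size P <= (size s).+1)%N, P.[x] = 1 & forall y, y \in s -> P.[y] = 0].
Proof.
move=> x_notin_s; pose c := \prod_(y <- s) (x - y).
have c_neq0 : c != 0.
  rewrite prodf_seq_neq0; apply/allP => y y_in_s /=.
  by rewrite subr_eq0; apply: contraNneq x_notin_s => ->.
exists (c^-1 *: \prod_(y <- s) ('X - y%:P)); split.
- by rewrite (leq_trans (size_scale_leq _ _)) // size_prod_XsubC.
- rewrite hornerZ horner_prod; under eq_bigr do rewrite hornerXsubC.
  exact: mulVf.
- move=> y y_in_s; rewrite hornerZ horner_prod; apply/eqP.
  rewrite mulf_eq0 prodf_seq_eq0; apply/orP; right; apply/hasP.
  by exists y => //=; rewrite hornerXsubC subrr.
Qed.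

(* Bijective base-3 numeration with digits 1 and 2. *)
Definition code (w : word) : nat :=
  foldl (fun (k : nat) (b : bool) => 3 * k + (1 + b))%N 0%N w.

Lemma code_rcons (w : word) (b : bool) :
  code (rcons w b) = (3 * code w + (1 + b))%N.
Proof. by rewrite /code foldl_rcons. Qed.

Lemma code_inj : injective code.
Proof.
elim/last_ind => [|w1 b1 IHw] w2; case/lastP: w2 => [|w2 b2] //;
  rewrite ?code_rcons /=; try by rewrite /code /=; lia.
move=> code_eq.
have b12 : b1 = b2 by move: code_eq; case: b1; case: b2 => /=; lia.
by rewrite b12 (IHw w2) //; move: code_eq; rewrite b12; lia.
Qed.

Definition code_step (R : realFieldType) (b : bool) : {poly R} :=
  3%:R%:P * 'X + (1 + b)%N%:R%:P.

Lemma size_code_step (R : realFieldType) (b : bool) :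
  (size (code_step R b) <= 2)%N.
Proof.
rewrite /code_step size_MXaddC; case: ifP => // _.
by rewrite ltnS size_polyC leq_b1.
Qed.

Lemma run_code_step (R : realFieldType) (w : word) :
  run (code_step R) w = (code w)%:R.
Proof.
elim/last_ind: w => [|w b IHw]; first by rewrite /run /code /= mulr0n.
rewrite /run foldl_rcons -/(run _ w) IHw code_rcons /code_step !hornerE.
by rewrite -natrM -natrD addnA.
Qed.

Theorem mainTheorem12 (R : realFieldType) (x : seq bool) (Y : seq (seq bool)) :
  uniq Y -> Y != [::] -> x \notin Y ->
  exists M : afa R (2 ^ size Y)%N,
    is_afa M /\ accept_prob M x = 1 /\
    (forall y, y \in Y -> accept_prob M y = 0).
Proof.
(* Repeated words only repeat roots of the interpolation polynomial. *)
move=> _ Y_neq0 x_notin_Y.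
have N_gt1 : (1 < 2 ^ size Y)%N.
  by rewrite -{1}(expn0 2) ltn_exp2l // lt0n size_eq0.
pose e (w : word) : R := (code w)%:R.
have e_inj : injective e.
  by move=> w1 w2 /eqP; rewrite eqr_nat => /eqP/code_inj.
have ex_notin_eY : e x \notin [seq e y | y <- Y] by rewrite mem_map.
have [P [size_P Px Py]] := exists_indicator_poly ex_notin_eY.
have size_P_le : (size P <= 2 ^ size Y)%N.
  by rewrite (leq_trans size_P) // size_map ltn_expl.
exists (poly_afa N_gt1 (code_step R) P); split; first exact: is_afa_poly_afa.
split=> [|y y_in_Y]; rewrite (accept_prob_poly_afa _ (@size_code_step R)) //.
  by rewrite run_code_step Px subrr normr0 add0r normr1 divr1.
rewrite run_code_step Py ?normr0 ?mul0r //; exact: (map_f e).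
Qed.
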